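(* Let $J\subseteq S$. The fibers of $\Pi_\downarrow^J$ are order-convex: if $u,x,v\in\mathfrak{S}_n^J$ satisfy $u\le_S x\le_S v$ and $\Pi_\downarrow^J(u)=\Pi_\downarrow^J(v)$, then $\Pi_\downarrow^J(u)=\Pi_\downarrow^J(x)$.
   Context: $\mathfrak{S}_n$ is the symmetric group on $[n]$, $s_i=(i,i+1)$, $S=\{s_1,\dots,s_{n-1}\}$, one-line notation $w=w_1\cdots w_n$, $\mathrm{inv}(w)=\{(i,j):i<j,\ w_i>w_j\}$, and the weak order $u\le_S v\iff\mathrm{inv}(u)\subseteq\mathrm{inv}(v)$. For $J\subseteq S$, $\mathfrak{S}_n^J$ is the set of $w$ with $w_i<w_{i+1}$ whenever $s_i\in J$. Writing $J=S\setminus\{s_{j_1},\dots,s_{j_r}\}$ with $j_1<\dots<j_r$, the $J$-regions are $\{1,\dots,j_1\},\{j_1+1,\dots,j_2\},\dots,\{j_r+1,\dots,n\}$. $\mathfrak{S}_n^J(231)$ is the set of $w\in\mathfrak{S}_n^J$ admitting no indices $i<j<k$ in pairwise different $J$-regions with $w_k<w_i<w_j$ and $w_i=w_k+1$. For each $w\in\mathfrak{S}_n^J$ there is a unique greatest element (in $\le_S$) of $\mathfrak{S}_n^J(231)$ lying below $w$; the map $\Pi_\downarrow^J:\mathfrak{S}_n^J\to\mathfrak{S}_n^J(231)$ sends $w$ to this element. *)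

From mathcomp Require Import all_boot all_fingroup.
Set Implicit Arguments. Unset Strict Implicit. Unset Printing Implicit Defensive.

(* Conventions (0-based): position p of 'I_n is the paper's index p+1, and
   w p is the paper's value w_{p+1} minus 1.  A subset J of S = {s_1,...,s_{n-1}}
   is J : {set 'I_n.-1}, where k : 'I_n.-1 stands for s_{k+1}, which swaps the
   0-based positions k and k+1. *)

Definition inv n (w : {perm 'I_n}) : {set 'I_n * 'I_n} :=
  [set ij : 'I_n * 'I_n | (ij.1 < ij.2) && (w ij.2 < w ij.1)].

Definition leS n (u v : {perm 'I_n}) : bool := inv u \subset inv v.

Definition genIn n (J : {set 'I_n.-1}) (i : nat) : bool :=
  [exists k : 'I_n.-1, (val k == i) && (k \in J)].

Definition inSJ n (J : {set 'I_n.-1}) (w : {perm 'I_n}) : bool :=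
  [forall i : 'I_n, forall j : 'I_n,
     ((val j == (val i).+1) && genIn J (val i)) ==> (w i < w j)].

(* positions p <= q lie in the same J-region: no region boundary between them,
   i.e. every s_{k+1} with p <= k < q belongs to J *)
Definition sameRegion n (J : {set 'I_n.-1}) (p q : nat) : bool :=
  [forall k : 'I_n.-1, ((p <= val k) && (val k < q)) ==> (k \in J)].

Definition avoid231 n (J : {set 'I_n.-1}) (w : {perm 'I_n}) : bool :=
  inSJ J w &&
  ~~ [exists i : 'I_n, exists j : 'I_n, exists k : 'I_n,
        [&& i < j, j < k,
            ~~ sameRegion J i j, ~~ sameRegion J j k, ~~ sameRegion J i k,
            w k < w i, w i < w j & val (w i) == (val (w k)).+1]].

Definition is_pidown n (J : {set 'I_n.-1}) (w p : {perm 'I_n}) : bool :=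
  avoid231 J p && leS p w &&
  [forall q : {perm 'I_n}, (avoid231 J q && leS q w) ==> leS q p].

(* Pi_down^J(w): the (unique) greatest element of S_n^J(231) below w
   (default w if none exists, which never happens for w \in S_n^J). *)
Definition pidown n (J : {set 'I_n.-1}) (w : {perm 'I_n}) : {perm 'I_n} :=
  if [pick p | is_pidown J w p] is Some p then p else w.

From Pilot Require Import Defs.
From mathcomp Require Import all_boot all_fingroup.
From mathcomp Require Import zify.
Set Implicit Arguments. Unset Strict Implicit. Unset Printing Implicit Defensive.

(* A permutation is determined by its inversion set (each value is the number of
   smaller values), so the weak order is antisymmetric, and the theorem follows from
   the maximality of Pi_down: with p = Pi_down(u) = Pi_down(v), p <= u <= x gives
   p <= Pi_down(x), and Pi_down(x) <= x <= v gives Pi_down(x) <= p.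
   Existence of Pi_down(w) for w in S_n^J goes by induction on the number of
   inversions.  If w has a 231-pattern (i, j, k) with w_i = w_k + 1, exchanging the
   values w_i and w_k removes exactly the inversion (i, k), and no 231-avoiding
   q <= w has that inversion: otherwise take r > j outside the region of j with
   q_r < q_i and q_r maximal; the position l of the value q_r + 1 satisfies l <= i,
   so (l, j, r) is a forbidden pattern of q. *)

Lemma card_ord_lt n m : m <= n -> #|[set y : 'I_n | y < m]| = m.
Proof.
move=> le_mn; rewrite cardsE cardE /enum_mem size_filter -enumT.
rewrite (@eq_count _ _ (preim val (fun i => i < 0 + m))) // -count_map.
by rewrite val_enum_ord -size_filter filter_iota_ltn // size_iota.
Qed.

Section WeakOrder.
Variable n : nat.
Implicit Types (u v w q : {perm 'I_n}) (a b c d : 'I_n).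

Lemma leS_trans u v w : leS u v -> leS v w -> leS u w.
Proof. exact: subset_trans. Qed.

Lemma perm_rank w a : w a = #|[set b | w b < w a]| :> nat.
Proof.
have -> : [set b | w b < w a] = preimset w (mem [set y : 'I_n | y < w a]).
  by apply/setP => b; rewrite !inE.
by rewrite card_preimset ?card_ord_lt //; [exact: ltnW | exact: perm_inj].
Qed.

Lemma ltn_perm_inv w a b : a < b -> (w a < w b) = ((a, b) \notin Defs.inv w).
Proof.
move=> ab; rewrite inE /= ab /= -leqNgt ltn_neqAle (inj_eq val_inj) (inj_eq perm_inj).
by rewrite -val_eqE /= (ltn_eqF ab).
Qed.

Lemma inv_inj : injective (@Defs.inv n).
Proof.
move=> u v Euv; apply/permP => a; apply: val_inj; rewrite /= (perm_rank u) (perm_rank v).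
apply: eq_card => b; rewrite !inE.
case: (ltngtP b a) => [ba | ab | /val_inj->]; last by rewrite !ltnn.
  by rewrite !ltn_perm_inv // Euv.
by have := congr1 (fun A : {set 'I_n * 'I_n} => (a, b) \in A) Euv; rewrite !inE /= ab.
Qed.

Lemma leS_anti u v : leS u v -> leS v u -> u = v.
Proof. by move=> uv vu; apply: inv_inj; apply/eqP; rewrite eqEsubset; apply/andP. Qed.

Lemma leS_descent q w a b : leS q w -> a < b -> q b < q a -> w b < w a.
Proof. by move=> qw ab; have := subsetP qw (a, b); rewrite !inE /= ab. Qed.

Lemma leS_ascent q w a b : leS q w -> a < b -> w a < w b -> q a < q b.
Proof. by move=> qw ab; rewrite !ltn_perm_inv //; apply: contra; apply: subsetP. Qed.

Lemma leS_no_value_between q w a c b : leS q w -> w a = (w b).+1 :> nat ->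
  a < c -> c < b -> q b < q c -> q c < q a -> False.
Proof.
move=> qw wab ac cb qbc qca.
by have := leS_descent qw ac qca; have := leS_descent qw cb qbc; rewrite wab; lia.
Qed.

Lemma tperm_succ_lt a b c d : a = b.+1 :> nat ->
  ~~ ((c == a) && (d == b)) -> ~~ ((c == b) && (d == a)) ->
  (tperm a b d < tperm a b c) = (d < c).
Proof.
move=> ab; case: tpermP => [->|->|/eqP + /eqP +]; case: tpermP => [->|->|/eqP + /eqP +];
  rewrite -?val_eqE /= ?eqxx; lia.
Qed.

Lemma inv_swap_succ w a b : a < b -> w a = (w b).+1 :> nat ->
  Defs.inv (w * tperm (w a) (w b))%g = Defs.inv w :\ (a, b).
Proof.
move=> ab wab; apply/setP => -[p r]; rewrite !inE /= xpair_eqE !permM.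
case: (boolP ((p == a) && (r == b))) => [/andP[/eqP-> /eqP->] | not_ab] /=.
  by rewrite tpermL tpermR wab ab /= ltnNge leqnSn.
case: (ltnP p r) => pr //=; rewrite tperm_succ_lt // !(inj_eq perm_inj) //.
by apply: contraTN pr => /andP[/eqP-> /eqP->]; rewrite -leqNgt ltnW.
Qed.

End WeakOrder.

Section Avoid231.
Variables (n : nat) (J : {set 'I_n.-1}).
Implicit Types (w p q : {perm 'I_n}) (i j k : 'I_n).

Definition pattern231 w i j k : bool :=
  [&& i < j, j < k,
      ~~ sameRegion J i j, ~~ sameRegion J j k, ~~ sameRegion J i k,
      w k < w i, w i < w j & val (w i) == (val (w k)).+1].

Lemma avoid231_pattern w i j k : avoid231 J w -> ~~ pattern231 w i j k.
Proof. by case/andP => _ /existsPn/(_ i)/existsPn/(_ j)/existsPn/(_ k). Qed.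

Lemma pattern231_of_not_avoid w : inSJ J w -> ~~ avoid231 J w ->
  exists i j k, pattern231 w i j k.
Proof.
by rewrite /avoid231 => -> /negbNE/existsP[i /existsP[j /existsP[k pat]]]; exists i, j, k.
Qed.

Lemma sameRegion_sub a b c d : c <= a -> b <= d -> sameRegion J c d -> sameRegion J a b.
Proof.
move=> ca bd /forallP cd; apply/forallP => m; apply/implyP => /andP[am mb].
by apply: (implyP (cd m)); rewrite (leq_trans ca am) (leq_trans mb bd).
Qed.

Lemma inSJ_leS q w : leS q w -> inSJ J w -> inSJ J q.
Proof.
move=> qw /forallP wJ; apply/forallP => i; apply/forallP => j; apply/implyP => ij.
apply: leS_ascent qw _ (implyP (forallP (wJ i) j) ij).
by case/andP: ij => /eqP->.
Qed.

Lemma leS_pattern231_ascent q w i j k :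
  avoid231 J q -> leS q w -> pattern231 w i j k -> q i < q k.
Proof.
move=> Aq qw /and5P[ij jk sij sjk /and4P[_ _ wij /eqP wik]].
have qij : q i < q j := leS_ascent qw ij wij.
case: (ltngtP (q i) (q k)) => // [qki | /val_inj/perm_inj eik]; last first.
  by move: ij jk; rewrite eik; lia.
pose P (r : 'I_n) := [&& j < r, ~~ sameRegion J j r & q r < q i].
have Pk : P k by rewrite /P jk sjk qki.
have [r /and3P[jr sjr qri] rmax] := arg_maxnP (fun r => val (q r)) Pk.
have succ_lt : (q r).+1 < n := leq_ltn_trans qri (ltn_ord _).
set l := (q^-1)%g (Ordinal succ_lt).
have ql : q l = (q r).+1 :> nat by rewrite permKV.
(* l > i is impossible: for l < k, w would take a value strictly between w_k and
   w_i = w_k + 1 at l; for l >= k, l would beat r in the choice of r. *)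
have li : l <= i.
  rewrite leqNgt; apply/negP => il.
  have qli : q l < q i.
    rewrite ltn_neqAle (inj_eq val_inj) (inj_eq perm_inj) ql qri andbT.
    by apply: contraTneq il => ->; rewrite ltnn.
  case: (ltnP l k) => [lk | kl].
    by apply: (leS_no_value_between qw wik il lk _ qli); rewrite ql ltnS; apply: rmax.
  have Pl : P l.
    by rewrite /P qli (leq_trans jk kl) andbT; apply: contra sjk; apply: sameRegion_sub.
  by have := rmax l Pl; rewrite /= ql ltnn.
have slj : ~~ sameRegion J l j by apply: contra sij; apply: sameRegion_sub.
case/negP: (avoid231_pattern l j r Aq).
rewrite /pattern231 (leq_ltn_trans li ij) jr slj sjr ql ltnSn (leq_ltn_trans qri qij) /=.
by rewrite ql eqxx andbT; apply: contra slj; apply: sameRegion_sub => //; apply: ltnW.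
Qed.

Lemma inv_swap_pattern231 w i j k : pattern231 w i j k ->
  Defs.inv (w * tperm (w i) (w k))%g = Defs.inv w :\ (i, k).
Proof.
by case/and5P => ij jk _ _ /and4P[_ _ _ /eqP wik]; apply: inv_swap_succ (ltn_trans ij jk) wik.
Qed.

Lemma leS_swap_pattern231 q w i j k : avoid231 J q -> leS q w -> pattern231 w i j k ->
  leS q (w * tperm (w i) (w k))%g.
Proof.
move=> Aq qw pat; rewrite /leS (inv_swap_pattern231 pat) subsetD1 -/(leS q w) qw.
by rewrite inE /= negb_and -!leqNgt (ltnW (leS_pattern231_ascent Aq qw pat)) orbT.
Qed.

Lemma is_pidownP w p : reflect
  [/\ avoid231 J p, leS p w & forall q, avoid231 J q -> leS q w -> leS q p]
  (is_pidown J w p).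
Proof.
apply: (iffP andP) => [[/andP[Ap pw] /forallP pmax] | [Ap pw pmax]].
  by split=> // q Aq qw; apply: (implyP (pmax q)); rewrite Aq qw.
by rewrite Ap pw; split=> //; apply/forallP => q; apply/implyP => /andP[]; apply: pmax.
Qed.

Lemma exists_pidown w : inSJ J w -> exists p, is_pidown J w p.
Proof.
elim: {w}#|Defs.inv w|.+1 {-2}w (ltnSn #|Defs.inv w|) => // m IH w inv_lt wJ.
have [Aw | /(pattern231_of_not_avoid wJ)[i [j [k pat]]]] := boolP (avoid231 J w).
  by exists w; apply/is_pidownP; split=> //; apply: subxx.
set w' := (w * tperm (w i) (w k))%g.
have ik_inv : (i, k) \in Defs.inv w.
  by rewrite inE /=; case/and5P: (pat) => ij jk _ _ /and4P[_ ->]; rewrite (ltn_trans ij jk).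
have w'w : leS w' w by rewrite /leS (inv_swap_pattern231 pat) subsetDl.
have inv'_lt : #|Defs.inv w'| < m.
  by rewrite (inv_swap_pattern231 pat); rewrite (cardsD1 (i, k)) ik_inv ltnS in inv_lt.
have [p /is_pidownP[Ap pw' pmax]] := IH w' inv'_lt (inSJ_leS w'w wJ).
exists p; apply/is_pidownP; split=> [//||q Aq qw]; first exact: leS_trans pw' w'w.
exact/pmax/(leS_swap_pattern231 Aq qw pat).
Qed.

Lemma pidown_spec w : inSJ J w ->
  [/\ avoid231 J (pidown J w), leS (pidown J w) w
    & forall q, avoid231 J q -> leS q w -> leS q (pidown J w)].
Proof.
move=> wJ; apply/is_pidownP; rewrite /pidown; case: pickP => // none.
by have [p] := exists_pidown wJ; rewrite none.
Qed.

End Avoid231.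

Theorem lemma3p13 (n : nat) (J : {set 'I_n.-1}) (u x v : {perm 'I_n}) :
  inSJ J u -> inSJ J x -> inSJ J v ->
  leS u x -> leS x v ->
  pidown J u = pidown J v ->
  pidown J u = pidown J x.
Proof.
move=> uJ xJ vJ ux xv Euv.
have [_ pu _] := pidown_spec uJ.
have [Apv _ pvmax] := pidown_spec vJ.
have [Apx px pxmax] := pidown_spec xJ.
apply: leS_anti.
  by apply: pxmax (leS_trans pu ux); rewrite Euv.
by rewrite Euv; apply: pvmax Apx (leS_trans px xv).
Qed.
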